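(* Let $F$ be the elementary cellular automaton with rule number 7. For every nonempty finite word $u\in\{0,1\}^*$, the deterministic communication complexity of $\textsc{SInv}_{F,u}$ restricted to inputs of length $n$ is bounded by a constant independent of $n$.
   Context: An elementary cellular automaton (ECA) with rule number $N\in\{0,\dots,255\}$ is the map $F:\{0,1\}^{\mathbb Z}\to\{0,1\}^{\mathbb Z}$ given by $F(x)_i=f(x_{i-1},x_i,x_{i+1})$. Here the local rule $f:\{0,1\}^3\to\{0,1\}$ is determined by $N=\sum_{a,b,c\in\{0,1\}}2^{4a+2b+c}f(a,b,c)$. For a nonempty finite word $u$, $p_u\in\{0,1\}^{\mathbb Z}$ is defined by $(p_u)_i=u_{i\bmod |u|}$. For a finite word $x$, $p_u[x]$ is the configuration equal to $x$ on positions $0,\dots,|x|-1$ and to $p_u$ elsewhere. $\textsc{SInv}_{F,u}$ is the decision problem: on input a finite word $x$, decide whether there is an integer $w$ such that for all $t\ge0$ the set of positions where $F^t(p_u)$ and $F^t(p_u[x])$ differ is contained in an interval of length $w$. For each $n$, it is regarded as a function $\{0,1\}^n\to\{0,1\}$. For a function $g:X\times Y\to Z$, $D(g)$ is the minimal depth of a deterministic two-party protocol computing $g$. In such a protocol, Alice knows $x$ and Bob knows $y$. The protocol is a binary tree: each internal node is labelled by a function of Alice's input only or of Bob's input only, with values in $\{\text{left},\text{right}\}$, and each leaf is labelled by an output value. For $g:\{0,1\}^m\to Z$, set $D(g)=\max_{0\le i<m}D(g_i)$, where $g_i:\{0,1\}^i\times\{0,1\}^{m-i}\to Z$ is $g_i(x,y)=g(xy)$.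 *)

From Stdlib Require Import ZArith List Arith Bool.
Import ListNotations.
Open Scope Z_scope.

Definition config := Z -> bool.

Definition local_rule (N : nat) (a b c : bool) : bool :=
  Nat.testbit N (4 * Nat.b2n a + 2 * Nat.b2n b + Nat.b2n c)%nat.

Definition eca (N : nat) (x : config) : config :=
  fun i => local_rule N (x (i - 1)) (x i) (x (i + 1)).

Definition eca_iter (N : nat) (t : nat) (x : config) : config :=
  Nat.iter t (eca N) x.

Definition periodic (u : list bool) : config :=
  fun i => nth (Z.to_nat (i mod Z.of_nat (length u))) u false.

Definition perturb (u x : list bool) : config :=
  fun i => if andb (0 <=? i) (i <? Z.of_nat (length x))
           then nth (Z.to_nat i) x false
           else periodic u i.

Definition SInv (N : nat) (u x : list bool) : Prop :=
  exists w : nat, forall t : nat, exists a : Z, forall i : Z,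
    eca_iter N t (periodic u) i <> eca_iter N t (perturb u x) i ->
    a <= i < a + Z.of_nat w.

Inductive protocol (X Y : Type) : Type :=
  | Leaf : bool -> protocol X Y
  | AliceNode : (X -> bool) -> protocol X Y -> protocol X Y -> protocol X Y
  | BobNode : (Y -> bool) -> protocol X Y -> protocol X Y -> protocol X Y.

Arguments Leaf {X Y} _.
Arguments AliceNode {X Y} _ _ _.
Arguments BobNode {X Y} _ _ _.

Fixpoint run {X Y : Type} (p : protocol X Y) (x : X) (y : Y) : bool :=
  match p with
  | Leaf b => b
  | AliceNode f l r => if f x then run l x y else run r x y
  | BobNode g l r => if g y then run l x y else run r x y
  end.

Fixpoint depth {X Y : Type} (p : protocol X Y) : nat :=
  match p with
  | Leaf _ => 0
  | AliceNode _ l r => S (Nat.max (depth l) (depth r))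
  | BobNode _ l r => S (Nat.max (depth l) (depth r))
  end.

Definition cc_split_le (N : nat) (u : list bool) (n i C : nat) : Prop :=
  exists p : protocol (list bool) (list bool),
    (depth p <= C)%nat /\
    forall x y : list bool, length x = i -> length y = (n - i)%nat ->
      (run p x y = true <-> SInv N u (x ++ y)).

(* D(SInv_{F,u} restricted to {0,1}^n) <= C, i.e. max over 0 <= i < n. *)
Definition cc_le (N : nat) (u : list bool) (n C : nat) : Prop :=
  forall i : nat, (i < n)%nat -> cc_split_le N u n i C.

(* Write F for rule 7, F(x)_i = ~x_{i-1} /\ ~(x_i /\ x_{i+1}), and H = F^2. Call a cell good when
   its five-cell neighbourhood has one of a few shapes; then good cells spread to the right at
   speed one or two per step of H, a cell of equal neighbours x_c = x_{c+1} creates a good cell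
   after one step of H, and on an everywhere-good configuration H is the right shift.
   If p_u has two equal neighbours, H p_u has good cells in every period, hence so does
   H p_u[x] away from the perturbation; after a number of steps linear in |x| both orbits are
   everywhere good and from then on only translate, so the difference stays in a window of
   bounded width: SInv holds for every x.
   Otherwise p_u alternates, is fixed by H and has no good cell; if x disagrees with p_u the
   perturbed orbit contains a good cell which spreads into an ever wider region of differences,
   so SInv(x) holds iff x agrees with p_u. In both cases SInv(xy) is a rectangle A(x) /\ B(y),
   decided by a protocol of depth 2. *)
From Stdlib Require Import ZArith List Arith Bool Lia FunctionalExtensionality Classical ClassicalEpsilon.
Open Scope Z_scope.

Definition rule7 (x : config) : config :=
  fun i => negb (x (i - 1)) && negb (x i && x (i + 1)).

Lemma eca7_rule7 : eca 7 = rule7.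
Proof.
  apply functional_extensionality; intro x; apply functional_extensionality; intro i.
  unfold eca, rule7, local_rule.
  destruct (x (i - 1)), (x i), (x (i + 1)); reflexivity.
Qed.

Lemma eca_iter7 t x : eca_iter 7 t x = Nat.iter t rule7 x.
Proof. unfold eca_iter; rewrite eca7_rule7; reflexivity. Qed.

Definition rule7_sq (x : config) : config := rule7 (rule7 x).

Lemma rule7_iter_double k y : Nat.iter (2 * k) rule7 y = Nat.iter k rule7_sq y.
Proof.
  induction k as [|k IH]; [reflexivity|].
  replace (2 * S k)%nat with (S (S (2 * k))) by lia.
  rewrite !Nat.iter_succ, IH; reflexivity.
Qed.

Definition good_window (a b c d e : bool) : bool :=
  if c then b || d else (negb a && negb b) || (negb b && negb d) || (negb d && negb e).

Definition good (x : config) (i : Z) : bool :=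
  good_window (x (i - 2)) (x (i - 1)) (x i) (x (i + 1)) (x (i + 2)).

Lemma good_agree x y j :
  (forall k, j - 2 <= k <= j + 2 -> x k = y k) -> good x j = good y j.
Proof. intro E; unfold good; rewrite !E by lia; reflexivity. Qed.

Lemma good_diff_near x y j :
  good x j <> good y j -> exists k, j - 2 <= k <= j + 2 /\ x k <> y k.
Proof.
  intro D; apply NNPP; intro N; apply D, good_agree.
  intros k Hk; apply NNPP; intro E; apply N; eauto.
Qed.

Definition translate (x : config) (s : Z) : config := fun k => x (s + k).

Lemma translate_add x a b : translate (translate x a) b = translate x (a + b).
Proof.
  apply functional_extensionality; intro k; unfold translate; cbn; f_equal; ring.
Qed.

Lemma rule7_translate x s : rule7 (translate x s) = translate (rule7 x) s.
Proof.
  apply functional_extensionality; intro k; unfold rule7, translate.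
  replace (s + (k - 1)) with (s + k - 1) by ring; replace (s + (k + 1)) with (s + k + 1) by ring.
  reflexivity.
Qed.

Lemma rule7_sq_translate x s : rule7_sq (translate x s) = translate (rule7_sq x) s.
Proof. unfold rule7_sq; rewrite !rule7_translate; reflexivity. Qed.

Lemma good_translate x s k : good (translate x s) k = good x (s + k).
Proof.
  unfold good, translate.
  replace (s + (k - 2)) with (s + k - 2) by ring; replace (s + (k - 1)) with (s + k - 1) by ring;
  replace (s + (k + 1)) with (s + k + 1) by ring; replace (s + (k + 2)) with (s + k + 2) by ring.
  reflexivity.
Qed.

(* The four local facts below are finite checks at the origin, moved to cell [i] by translation. *)
Ltac case_cells w := repeat match goal with |- context [w ?k] => destruct (w k) end.

Lemma good_spreads x i :
  good x i = true -> good (rule7_sq x) (i + 1) = true /\ good (rule7_sq x) (i + 2) = true.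
Proof.
  assert (at0 : forall w, good w 0 = true ->
            good (rule7_sq w) 1 = true /\ good (rule7_sq w) 2 = true).
  { intro w; unfold good, rule7_sq, rule7, good_window; simpl.
    case_cells w; simpl; intuition congruence. }
  intro G; specialize (at0 (translate x i)).
  rewrite rule7_sq_translate, !good_translate, Z.add_0_r in at0; auto.
Qed.

Lemma good_of_equal_pair x c :
  x c = x (c + 1) -> good (rule7_sq x) (c + 2) = true \/ good (rule7_sq x) (c + 3) = true.
Proof.
  assert (at0 : forall w, w 0 = w 1 ->
            good (rule7_sq w) 2 || good (rule7_sq w) 3 = true).
  { intro w; unfold good, rule7_sq, rule7, good_window; simpl.
    case_cells w; simpl; intuition congruence. }
  intro E; specialize (at0 (translate x c)).
  rewrite rule7_sq_translate, !good_translate in at0; unfold translate in at0.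
  rewrite Z.add_0_r in at0; apply orb_true_iff; auto.
Qed.

Lemma rule7_sq_shift_of_good x i :
  good x (i - 1) = true -> good x i = true -> good x (i + 1) = true -> rule7_sq x i = x (i - 1).
Proof.
  assert (at0 : forall w, good w (-1) = true -> good w 0 = true -> good w 1 = true ->
            rule7_sq w 0 = w (-1)).
  { intro w; unfold good, rule7_sq, rule7, good_window; simpl.
    case_cells w; simpl; intuition congruence. }
  intros G1 G2 G3; specialize (at0 (translate x i)).
  rewrite rule7_sq_translate, !good_translate in at0; unfold translate in at0.
  rewrite Z.add_0_r in at0.
  replace (i - 1) with (i + -1) by ring; apply at0; auto.
Qed.

Definition alternating (x : config) : Prop := forall j, x (j + 1) = negb (x j).

Lemma alternating_fixed_not_good x :
  alternating x -> forall i, rule7_sq x i = x i /\ good x i = false.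
Proof.
  assert (at0 : forall w, w (-1) = negb (w (-2)) -> w 0 = negb (w (-1)) ->
            w 1 = negb (w 0) -> w 2 = negb (w 1) -> rule7_sq w 0 = w 0 /\ good w 0 = false).
  { intro w; unfold good, rule7_sq, rule7, good_window; simpl.
    case_cells w; simpl; intuition congruence. }
  intros A i; specialize (at0 (translate x i)).
  rewrite rule7_sq_translate, !good_translate in at0; unfold translate in at0.
  rewrite Z.add_0_r in at0; apply at0.
  - replace (i + -1) with (i + -2 + 1) by ring; apply A.
  - replace i with (i + -1 + 1) at 1 by ring; apply A.
  - apply A.
  - replace (i + 2) with (i + 1 + 1) by ring; apply A.
Qed.

Lemma alternating_ext x y a : alternating x -> alternating y -> x a = y a -> x = y.
Proof.
  intros Ax Ay E; apply functional_extensionality; intro k.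
  replace k with (a + (k - a)) by ring; generalize (k - a); clear k.
  apply Z.peano_ind.
  - rewrite Z.add_0_r; exact E.
  - intros m IH; rewrite <- Z.add_1_r, Z.add_assoc, Ax, Ay, IH; reflexivity.
  - intros m IH.
    replace (a + m) with (a + Z.pred m + 1) in IH by lia.
    rewrite Ax, Ay in IH; destruct (x (a + Z.pred m)), (y (a + Z.pred m)); simpl in *; congruence.
Qed.

Lemma equal_pair_of_not_alternating x : ~ alternating x -> exists c, x c = x (c + 1).
Proof.
  intro NA; apply NNPP; intro NE; apply NA; intro j.
  destruct (x j) eqn:E1, (x (j + 1)) eqn:E2; try reflexivity;
    exfalso; apply NE; exists j; congruence.
Qed.

Lemma rule7_diff_local x y i :
  rule7 x i <> rule7 y i -> x (i - 1) <> y (i - 1) \/ x i <> y i \/ x (i + 1) <> y (i + 1).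
Proof.
  unfold rule7; intro D.
  destruct (bool_dec (x (i - 1)) (y (i - 1))); auto.
  destruct (bool_dec (x i) (y i)); auto.
  destruct (bool_dec (x (i + 1)) (y (i + 1))); auto.
  exfalso; apply D; congruence.
Qed.

Lemma rule7_iter_diff_cone x y a b :
  (forall j, x j <> y j -> a <= j < b) -> forall t i,
  Nat.iter t rule7 x i <> Nat.iter t rule7 y i -> a - Z.of_nat t <= i < b + Z.of_nat t.
Proof.
  intros D t; induction t as [|t IH]; intros i E.
  - specialize (D i E); simpl; lia.
  - apply rule7_diff_local in E; rewrite Nat2Z.inj_succ.
    destruct E as [E|[E|E]]; apply IH in E; lia.
Qed.

Lemma good_spreads_far k y j d :
  good y j = true -> Z.of_nat k <= d <= 2 * Z.of_nat k ->
  good (Nat.iter k rule7_sq y) (j + d) = true.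
Proof.
  revert d; induction k as [|k IH]; intros d G Hd.
  - simpl in *; replace (j + d) with j by lia; exact G.
  - rewrite Nat2Z.inj_succ in Hd; simpl.
    destruct (Z_le_gt_dec d (2 * Z.of_nat k + 1)).
    + replace (j + d) with (j + (d - 1) + 1) by ring.
      apply good_spreads, IH; auto; lia.
    + replace (j + d) with (j + (d - 2) + 2) by ring.
      apply good_spreads, IH; auto; lia.
Qed.

(* A good cell in every window of length [L] outside [[lo, hi)] reaches every cell after
   [hi - lo + 2L] steps of H: the cells left of [lo + 2K - L] from the left, the others from
   the right. *)
Lemma all_good_after (y : config) (L lo hi : Z) (K : nat) :
  0 < L -> lo <= hi -> Z.of_nat K = hi - lo + 2 * L ->
  (forall s, s + L <= lo \/ hi <= s -> exists j, s <= j < s + L /\ good y j = true) ->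
  forall i, good (Nat.iter K rule7_sq y) i = true.
Proof.
  intros HL Hlh HK W i.
  destruct (Z_le_gt_dec i (lo + 2 * Z.of_nat K - L)).
  - destruct (W (i - 2 * Z.of_nat K) ltac:(lia)) as [j [Hj G]].
    replace i with (j + (i - j)) by ring; apply good_spreads_far; auto; lia.
  - destruct (W (i - Z.of_nat K - L + 1) ltac:(lia)) as [j [Hj G]].
    replace i with (j + (i - j)) by ring; apply good_spreads_far; auto; lia.
Qed.

Lemma rule7_sq_iter_shift_of_all_good y :
  (forall i, good y i = true) -> forall k i, Nat.iter k rule7_sq y i = y (i - Z.of_nat k).
Proof.
  intro G.
  assert (Inv : forall z, (forall i, good z i = true) -> forall i, good (rule7_sq z) i = true).
  { intros z Gz i; replace i with (i - 1 + 1) by ring; apply good_spreads, Gz. }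
  intro k; induction k as [|k IH]; intro i.
  - simpl; f_equal; lia.
  - rewrite Nat.iter_succ, rule7_sq_shift_of_good, IH by apply (Nat.iter_invariant k _ _ _ Inv), G.
    f_equal; lia.
Qed.

Lemma diff_width_bounded_of_all_good p q (n K : nat) :
  (forall j, p j <> q j -> 0 <= j < Z.of_nat n) ->
  (forall i, good (Nat.iter K rule7_sq p) i = true) ->
  (forall i, good (Nat.iter K rule7_sq q) i = true) ->
  exists w : nat, forall t, exists a, forall i,
    Nat.iter t rule7 p i <> Nat.iter t rule7 q i -> a <= i < a + Z.of_nat w.
Proof.
  intros D Gp Gq.
  set (T0 := (2 * K)%nat).
  assert (Cone := rule7_iter_diff_cone p q 0 (Z.of_nat n) D).
  assert (Even : forall j i, Nat.iter (2 * j + T0) rule7 p i <> Nat.iter (2 * j + T0) rule7 q i ->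
            - Z.of_nat T0 <= i - Z.of_nat j < Z.of_nat n + Z.of_nat T0).
  { intros j i Dj; unfold T0 in Dj.
    rewrite !Nat.iter_add, !rule7_iter_double,
      !(rule7_sq_iter_shift_of_all_good _ Gp), !(rule7_sq_iter_shift_of_all_good _ Gq),
      <- !rule7_iter_double in Dj.
    apply Cone in Dj; lia. }
  exists (n + 2 * T0 + 2)%nat; intro t.
  destruct (lt_dec t T0).
  - exists (- Z.of_nat t); intros i Dt; apply Cone in Dt; lia.
  - destruct (Nat.Even_or_Odd (t - T0)) as [[j Hj]|[j Hj]];
      exists (Z.of_nat j - Z.of_nat T0 - 1); intros i Dt.
    + replace t with (2 * j + T0)%nat in Dt by lia; apply Even in Dt; lia.
    + replace t with (S (2 * j + T0)) in Dt by lia; rewrite Nat.iter_succ in Dt.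
      apply rule7_diff_local in Dt; destruct Dt as [Dt|[Dt|Dt]]; apply Even in Dt; lia.
Qed.

Lemma periodic_translate u : u <> nil -> translate (periodic u) (Z.of_nat (length u)) = periodic u.
Proof.
  intro Hu; apply functional_extensionality; intro i; unfold translate, periodic.
  rewrite Z.add_comm, <- (Z.mul_1_l (Z.of_nat (length u))) at 1.
  rewrite Z_mod_plus_full; reflexivity.
Qed.

Lemma translate_mul_period y L : translate y L = y -> forall m, translate y (m * L) = y.
Proof.
  intro P.
  assert (Nat : forall n : nat, translate y (Z.of_nat n * L) = y).
  { induction n as [|n IH].
    - apply functional_extensionality; intro k; reflexivity.
    - rewrite Nat2Z.inj_succ, Z.mul_succ_l, <- translate_add, IH; exact P. }
  intro m; destruct (Z_le_gt_dec 0 m).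
  - rewrite <- (Z2Nat.id m) by lia; apply Nat.
  - rewrite <- (Nat (Z.to_nat (- m))) at 1; rewrite translate_add, Z2Nat.id by lia.
    replace (- m * L + m * L) with 0 by ring.
    apply functional_extensionality; intro k; reflexivity.
Qed.

Lemma good_dense_of_periodic y L g :
  0 < L -> translate y L = y -> good y g = true ->
  forall s, exists j, s <= j < s + L /\ good y j = true.
Proof.
  intros HL P G s; exists (s + (g - s) mod L).
  pose proof (Z.mod_pos_bound (g - s) L HL); pose proof (Z.div_mod (g - s) L ltac:(lia)).
  split; [lia|].
  rewrite <- (translate_mul_period y L P ((g - s) / L)), good_translate, <- G.
  f_equal; lia.
Qed.

Lemma perturb_diff_support u x j :
  periodic u j <> perturb u x j -> 0 <= j < Z.of_nat (length x).
Proof.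
  unfold perturb; destruct ((0 <=? j) && (j <? Z.of_nat (length x))) eqn:E.
  - intros _; apply andb_true_iff in E; destruct E as [E1 E2].
    apply Z.leb_le in E1; apply Z.ltb_lt in E2; lia.
  - intro D; exfalso; apply D; reflexivity.
Qed.

Lemma SInv_rule7_of_equal_pair u x :
  u <> nil -> (exists c, periodic u c = periodic u (c + 1)) -> SInv 7 u x.
Proof.
  intros Hu [c Hc].
  set (p := periodic u); set (q := perturb u x).
  set (n := length x); set (L := Z.of_nat (length u)).
  assert (HL : 0 < L) by (destruct u; [congruence|unfold L; simpl; lia]).
  assert (Dpq : forall j, p j <> q j -> 0 <= j < Z.of_nat n) by apply perturb_diff_support.
  assert (Dsq : forall j, rule7_sq p j <> rule7_sq q j -> -2 <= j < Z.of_nat n + 2)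
    by (intros j D; apply (rule7_iter_diff_cone p q 0 _ Dpq 2) in D; lia).
  assert (Wp : forall s, exists j, s <= j < s + L /\ good (rule7_sq p) j = true).
  { assert (P : translate (rule7_sq p) L = rule7_sq p)
      by (rewrite <- rule7_sq_translate; f_equal; apply periodic_translate, Hu).
    destruct (good_of_equal_pair p c Hc) as [G|G]; exact (good_dense_of_periodic _ L _ HL P G). }
  assert (Wq : forall s, s + L <= -4 \/ Z.of_nat n + 4 <= s ->
            exists j, s <= j < s + L /\ good (rule7_sq q) j = true).
  { intros s Hs; destruct (Wp s) as [j [Hj G]]; exists j; split; [exact Hj|].
    rewrite <- G; symmetry; apply good_agree; intros k Hk.
    apply NNPP; intro D; apply Dsq in D; lia. }
  set (K := Z.to_nat (Z.of_nat n + 8 + 2 * L)).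
  assert (HK : Z.of_nat K = (Z.of_nat n + 4) - (-4) + 2 * L) by (unfold K; rewrite Z2Nat.id; lia).
  destruct (diff_width_bounded_of_all_good p q n (S K) Dpq) as [w Hw].
  - intro i; rewrite Nat.iter_succ_r.
    apply (all_good_after _ L (-4) (Z.of_nat n + 4) K); auto; lia.
  - intro i; rewrite Nat.iter_succ_r.
    apply (all_good_after _ L (-4) (Z.of_nat n + 4) K); auto; lia.
  - exists w; intro t; rewrite !eca_iter7; apply Hw.
Qed.

Definition agrees_from (y : config) (s : Z) (w : list bool) : Prop :=
  forall j, (j < length w)%nat -> nth j w false = y (s + Z.of_nat j).

Lemma agrees_from_app y s x z :
  agrees_from y s (x ++ z) <-> agrees_from y s x /\ agrees_from y (s + Z.of_nat (length x)) z.
Proof.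
  unfold agrees_from; rewrite length_app; split.
  - intro H; split; intros j Hj.
    + rewrite <- H by lia; rewrite app_nth1 by lia; reflexivity.
    + replace (s + Z.of_nat (length x) + Z.of_nat j) with (s + Z.of_nat (length x + j)) by lia.
      rewrite <- H by lia; rewrite app_nth2 by lia; f_equal; lia.
  - intros [Hx Hz] j Hj; destruct (lt_dec j (length x)).
    + rewrite app_nth1 by lia; auto.
    + rewrite app_nth2, Hz by lia; f_equal; lia.
Qed.

Lemma perturb_eq_periodic_iff u x : perturb u x = periodic u <-> agrees_from (periodic u) 0 x.
Proof.
  split.
  - intros E j Hj; rewrite <- E, Z.add_0_l; unfold perturb.
    replace ((0 <=? Z.of_nat j) && (Z.of_nat j <? Z.of_nat (length x))) with true
      by (symmetry; apply andb_true_iff; split; [apply Z.leb_le | apply Z.ltb_lt]; lia).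
    rewrite Nat2Z.id; reflexivity.
  - intro A; apply functional_extensionality; intro z; unfold perturb.
    destruct ((0 <=? z) && (z <? Z.of_nat (length x))) eqn:E; [|reflexivity].
    apply andb_true_iff in E; destruct E as [E1 E2]; apply Z.leb_le in E1; apply Z.ltb_lt in E2.
    rewrite A by lia; rewrite Z2Nat.id by lia; reflexivity.
Qed.

Lemma SInv_rule7_alternating_iff u x :
  alternating (periodic u) -> (SInv 7 u x <-> agrees_from (periodic u) 0 x).
Proof.
  intro A; rewrite <- perturb_eq_periodic_iff.
  set (p := periodic u) in *; set (q := perturb u x).
  split.
  - intros [w SI]; apply NNPP; intro Neq.
    assert (NA : ~ alternating q).
    { intro Aq; apply Neq, (alternating_ext _ _ (-1) Aq A).
      apply NNPP; intro D.
      assert (R := perturb_diff_support u x (-1) (fun E => D (eq_sym E))); lia. }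
    assert (Hg : exists g, good (rule7_sq q) g = true).
    { destruct (equal_pair_of_not_alternating q NA) as [c Hc].
      destruct (good_of_equal_pair q c Hc); eauto. }
    destruct Hg as [g Hg].
    assert (Fix : forall m, Nat.iter m rule7_sq p = p).
    { intro m; induction m as [|m IH]; [reflexivity|].
      rewrite Nat.iter_succ, IH; apply functional_extensionality; intro i.
      apply (alternating_fixed_not_good p A). }
    (* p is nowhere good while the good cell of q spreads over [g + k, g + 2k] *)
    set (k := (w + 5)%nat).
    assert (Far : forall d, Z.of_nat k <= d <= 2 * Z.of_nat k -> exists i,
               g + d - 2 <= i <= g + d + 2 /\
               Nat.iter (2 * S k) rule7 p i <> Nat.iter (2 * S k) rule7 q i).
    { intros d Hd; apply good_diff_near.
      rewrite !rule7_iter_double, Fix, Nat.iter_succ_r, (proj2 (alternating_fixed_not_good p A _)),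
        good_spreads_far by assumption.
      discriminate. }
    destruct (SI (2 * S k)%nat) as [a Sa]; rewrite !eca_iter7 in Sa.
    destruct (Far (Z.of_nat k) ltac:(lia)) as [i1 [Hi1 D1]].
    destruct (Far (2 * Z.of_nat k) ltac:(lia)) as [i2 [Hi2 D2]].
    apply Sa in D1; apply Sa in D2; unfold k in *; lia.
  - intro E; exists 0%nat; intro t; exists 0; intros i D; exfalso; apply D.
    unfold q in E; rewrite E; reflexivity.
Qed.

Lemma cc_split_le_rectangle N u n i (A B : list bool -> Prop) :
  (forall x y, length x = i -> length y = (n - i)%nat -> (SInv N u (x ++ y) <-> A x /\ B y)) ->
  cc_split_le N u n i 2.
Proof.
  intro E.
  set (dec := fun P : Prop => if excluded_middle_informative P then true else false).
  exists (AliceNode (fun x => dec (A x))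
            (BobNode (fun y => dec (B y)) (Leaf true) (Leaf false)) (Leaf false)).
  split; [simpl; lia|].
  intros x y Hx Hy; rewrite E by assumption; unfold dec; simpl.
  destruct (excluded_middle_informative (A x)), (excluded_middle_informative (B y));
    simpl; intuition congruence.
Qed.

Theorem mainTheorem4 :
  forall u : list bool, u <> nil ->
    exists C : nat, forall n : nat, cc_le 7 u n C.
Proof.
  intros u Hu; exists 2%nat; intros n i _.
  destruct (classic (alternating (periodic u))) as [A|NA].
  - apply (cc_split_le_rectangle _ _ _ _
             (agrees_from (periodic u) 0) (agrees_from (periodic u) (Z.of_nat i))).
    intros x y Hx _.
    rewrite SInv_rule7_alternating_iff, agrees_from_app, Hx by exact A; reflexivity.
  - apply (cc_split_le_rectangle _ _ _ _ (fun _ => True) (fun _ => True)).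
    intros x y _ _; split; [tauto|intros _].
    apply SInv_rule7_of_equal_pair, equal_pair_of_not_alternating; assumption.
Qed.
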